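(* Let $F:\mathbb{R}^d\to\mathbb{R}$ be continuously differentiable with $L$-Lipschitz gradient and lower bounded, $F_*:=\inf_\theta F(\theta)>-\infty$. Consider the simplified curvature-aware Adam iteration described in the context, and suppose the stochastic gradients satisfy, for all $k$, $\mathbb{E}[g_k\mid\theta_k]=\nabla F(\theta_k)$, $\mathbb{E}[\|g_k-\nabla F(\theta_k)\|^2\mid\theta_k]\le\sigma^2$, and $\|g_k\|_\infty\le\|g_k\|\le G$ for a constant $G>0$. Let the stepsize satisfy $\eta\le\min(1,1/L)$. Then there exist positive constants $C_1,C_2,C_3$, depending only on $L,\delta,\beta_1,G,C_\alpha,d$, such that for every $T\ge 1$, $$\frac{1}{T}\sum_{k=0}^{T-1}\mathbb{E}\|\nabla F(\theta_k)\|^2\le \frac{C_1\big(F(\theta_0)-F_*+G^2\big)}{\eta T}+C_2\eta+C_3\sigma^2.$$ In particular, choosing $\eta=\Theta(T^{-1/2})$ yields a bound of order $\mathcal{O}(T^{-1/2})+\mathcal{O}(\sigma^2)$.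
   Context: Simplified curvature-aware Adam iteration: given parameters $\beta_1,\beta_2\in[0,1)$, $\delta>0$, stepsize $\eta>0$, a base coefficient $\alpha_{\mathrm{base}}>0$, and stochastic gradient estimators $g_k$ of $\nabla F(\theta_k)$, the iterates are $\tilde g_k:=g_k+\alpha_k(g_k-g_{k-1})$, $m_k:=\beta_1 m_{k-1}+(1-\beta_1)\tilde g_k$, $v_k:=\beta_2 v_{k-1}+(1-\beta_2)\tilde g_k^{2}$ (coordinatewise), $\theta_{k+1}:=\theta_k-\eta\, m_k/(\sqrt{v_k}+\delta)$ (coordinatewise), with initialization $m_{-1}=0$, $v_{-1}=0$, $\theta_{-1}=\theta_0$, $\alpha_0=0$. The coefficients satisfy $|\alpha_k|\le C_\alpha:=2\alpha_{\mathrm{base}}$ for all $k$. $\|\cdot\|$ is the Euclidean norm. *)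

From HB Require Import structures.
From mathcomp Require Import all_boot all_order all_algebra.
From mathcomp Require Import all_classical all_reals all_analysis.
Set Implicit Arguments. Unset Strict Implicit. Unset Printing Implicit Defensive.
Import Order.TTheory GRing.Theory Num.Theory.
Import numFieldNormedType.Exports.
Local Open Scope classical_set_scope.
Local Open Scope ring_scope.

Section Defs.
Variable R : realType.

Definition sqnorm (d : nat) (x : 'rV[R]_d) : R := \sum_(i < d) x 0 i ^+ 2.
Definition enorm (d : nat) (x : 'rV[R]_d) : R := Num.sqrt (sqnorm x).

Definition dotv (d : nat) (x y : 'rV[R]_d) : R := \sum_(i < d) x 0 i * y 0 i.

(** One step of the simplified curvature-aware Adam recursion.
    State (theta_k, m_{k-1}, v_{k-1}); input gt = tilde g_k.
    Returns (theta_{k+1}, m_k, v_k). *)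
Definition adam_step (d : nat) (beta1 beta2 delta eta : R)
    (s : 'rV[R]_d * 'rV[R]_d * 'rV[R]_d) (gt : 'rV[R]_d) :=
  let: (th, m, v) := s in
  let m' := beta1 *: m + (1 - beta1) *: gt in
  let v' := beta2 *: v + (1 - beta2) *: map_mx (fun z => z ^+ 2) gt in
  (th - eta *: (\row_j (m' 0 j / (Num.sqrt (v' 0 j) + delta))), m', v').

(** tilde g_k := g_k + alpha_k (g_k - g_{k-1}); at k = 0 the term
    g_{-1} is irrelevant since alpha_0 = 0 (we set g_{-1} := g_0). *)
Definition gtilde (d : nat) (g : nat -> 'rV[R]_d) (alpha : nat -> R) (k : nat)
  : 'rV[R]_d := g k + alpha k *: (g k - g k.-1).

Fixpoint adam_state (d : nat) (beta1 beta2 delta eta : R) (th0 : 'rV[R]_d)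
    (g : nat -> 'rV[R]_d) (alpha : nat -> R) (k : nat)
    : 'rV[R]_d * 'rV[R]_d * 'rV[R]_d :=
  match k with
  | 0 => (th0, 0, 0)
  | k'.+1 => adam_step beta1 beta2 delta eta
               (adam_state beta1 beta2 delta eta th0 g alpha k') (gtilde g alpha k')
  end.

Definition adam_theta (d : nat) (beta1 beta2 delta eta : R) (th0 : 'rV[R]_d)
    (g : nat -> 'rV[R]_d) (alpha : nat -> R) (k : nat) : 'rV[R]_d :=
  (adam_state beta1 beta2 delta eta th0 g alpha k).1.1.

(** sigma(X): the sigma-algebra on Omega generated by a random vector
    X : Omega -> R^d (Borel sets of R^d = product of the coordinate Borel
    sigma-algebras). *)
Definition sigma_of (T : Type) (d : nat) (X : T -> 'rV[R]_d) : set (set T) :=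
  <<s \bigcup_(i in [set: 'I_d])
        preimage_set_system setT (fun w => X w 0 i) (@measurable _ R) >>.

End Defs.

(* The bound is proved along every trajectory and only then averaged.
   Bounded stochastic gradients make the momenta, the second moments and the
   steps u_k = m_k / (sqrt v_k + delta) bounded, and the preconditioner
   1 / (sqrt v_k + delta) lies between w = 1 / (1 + Gamma + delta) and 1 / delta.
   The descent lemma then gives
     w/2 |grad F(theta_k)|^2 <= (F(theta_k) - F(theta_k+1)) / eta
                                + |m_k - grad F(theta_k)|^2 / (2 delta) + O(eta).
   The momentum error |m_k - grad F(theta_k)|^2 satisfies a recursion contracting
   by beta1 (1 + (1 - beta1)/2) < 1, driven by the noise |g_k - grad F(theta_k)|^2
   and by the gradient drift |grad F(theta_k+1) - grad F(theta_k)|^2 = O(eta^2);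
   summing it bounds the total momentum error by the total noise plus O(T eta). *)

From HB Require Import structures.
From mathcomp Require Import all_boot all_order all_algebra.
From mathcomp Require Import all_classical all_reals all_analysis.
From mathcomp Require Import ring lra zify.
Import Order.TTheory GRing.Theory Num.Theory.
Import numFieldNormedType.Exports.
Import measurable_realfun.
Set Implicit Arguments. Unset Strict Implicit. Unset Printing Implicit Defensive.
Local Open Scope classical_set_scope.
Local Open Scope ring_scope.

Section EuclideanNorm.
Variables (R : realType) (d : nat).
Implicit Types (x y z : 'rV[R]_d) (c e : R).

Lemma sqnorm_ge0 x : 0 <= sqnorm x.
Proof. by apply: sumr_ge0 => i _; exact: sqr_ge0. Qed.

Lemma sqnorm0 : sqnorm (0 : 'rV[R]_d) = 0.
Proof. by rewrite /sqnorm big1 // => i _; rewrite mxE expr0n. Qed.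

Lemma sqr_enorm x : enorm x ^+ 2 = sqnorm x.
Proof. by rewrite /enorm sqr_sqrtr // sqnorm_ge0. Qed.

Lemma sqnorm_le_sqr x c : enorm x <= c -> sqnorm x <= c ^+ 2.
Proof. by move=> xc; rewrite -sqr_enorm lerXn2r// ?nnegrE ?(le_trans _ xc) ?sqrtr_ge0. Qed.

Lemma sqnorm_le_scale x y c : 0 <= c -> enorm x <= c * enorm y ->
  sqnorm x <= c ^+ 2 * sqnorm y.
Proof. by move=> c0 /sqnorm_le_sqr; rewrite exprMn sqr_enorm. Qed.

Lemma sqr_coord_le_sqnorm x i : x 0 i ^+ 2 <= sqnorm x.
Proof.
by rewrite /sqnorm (bigD1 i) //= lerDl; apply: sumr_ge0 => j _; exact: sqr_ge0.
Qed.

Lemma norm_coord_le_enorm x i : `|x 0 i| <= enorm x.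
Proof. by rewrite -sqrtr_sqr; apply: ler_wsqrtr; exact: sqr_coord_le_sqnorm. Qed.

Lemma sqnormZ c x : sqnorm (c *: x) = c ^+ 2 * sqnorm x.
Proof. by rewrite /sqnorm mulr_sumr; apply: eq_bigr => i _; rewrite mxE exprMn. Qed.

Lemma sqnormN x : sqnorm (- x) = sqnorm x.
Proof. by rewrite -scaleN1r sqnormZ sqrrN expr1n mul1r. Qed.

Lemma sqnormBC x y : sqnorm (x - y) = sqnorm (y - x).
Proof. by rewrite -sqnormN opprB. Qed.

Lemma dotvBl x y z : dotv (x - y) z = dotv x z - dotv y z.
Proof. by rewrite /dotv -sumrB; apply: eq_bigr => i _; rewrite !mxE mulrBl. Qed.

Lemma dotvZr c x y : dotv x (c *: y) = c * dotv x y.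
Proof. by rewrite /dotv mulr_sumr; apply: eq_bigr => i _; rewrite mxE mulrCA. Qed.

Lemma dotvNr x y : dotv x (- y) = - dotv x y.
Proof. by rewrite -scaleN1r dotvZr mulN1r. Qed.

Lemma sqnormD x y : sqnorm (x + y) = sqnorm x + 2 * dotv x y + sqnorm y.
Proof.
rewrite /sqnorm /dotv mulr_sumr -!big_split /=.
by apply: eq_bigr => i _; rewrite mxE; ring.
Qed.

Lemma dotv_young x y e : 0 < e ->
  2 * dotv x y <= e * sqnorm x + e^-1 * sqnorm y.
Proof.
move=> e0; rewrite /dotv /sqnorm !mulr_sumr -big_split /=.
apply: ler_sum => i _; set a := x 0 i; set b := y 0 i.
have : 0 <= e^-1 * (e * a - b) ^+ 2 by rewrite mulr_ge0 ?invr_ge0 ?sqr_ge0 ?ltW.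
have -> : e^-1 * (e * a - b) ^+ 2 = e * a ^+ 2 - 2 * (a * b) + e^-1 * b ^+ 2.
  by field; rewrite gt_eqF.
lra.
Qed.

Lemma sqnormD_young x y e : 0 < e ->
  sqnorm (x + y) <= (1 + e) * sqnorm x + (1 + e^-1) * sqnorm y.
Proof. by move=> /(dotv_young x y); rewrite sqnormD; lra. Qed.

Lemma sqnormD_le x y : sqnorm (x + y) <= 2 * sqnorm x + 2 * sqnorm y.
Proof. by have := sqnormD_young x y ltr01; rewrite invr1. Qed.

Lemma sqnormD3_le x y z :
  sqnorm (x + y + z) <= 3 * sqnorm x + 3 * sqnorm y + 3 * sqnorm z.
Proof.
rewrite /sqnorm !mulr_sumr -!big_split /=; apply: ler_sum => i _.
rewrite !mxE; set a := x 0 i; set b := y 0 i; set c := z 0 i.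
have := sqr_ge0 (a - b); have := sqr_ge0 (a - c); have := sqr_ge0 (b - c).
nra.
Qed.

Lemma sqnorm_convex x y c : 0 <= c <= 1 ->
  sqnorm (c *: x + (1 - c) *: y) <= c * sqnorm x + (1 - c) * sqnorm y.
Proof.
move=> /andP[c0 c1]; rewrite /sqnorm !mulr_sumr -!big_split /=.
apply: ler_sum => i _; rewrite !mxE; set a := x 0 i; set b := y 0 i.
have : 0 <= c * (1 - c) * (a - b) ^+ 2.
  by rewrite mulr_ge0 ?sqr_ge0 // mulr_ge0 // subr_ge0.
rewrite !expr2; nra.
Qed.

End EuclideanNorm.

Section DescentLemma.
Variables (R : realType) (d : nat) (L : R).
Variables (F : 'rV[R]_d -> R) (gradF : 'rV[R]_d -> 'rV[R]_d).
Hypotheses (L_gt0 : 0 < L) (F_diff : forall x, differentiable F x).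
Hypothesis dF : forall x v, 'd F x v = dotv (gradF x) v.
Hypothesis gradF_lip : forall x y, enorm (gradF x - gradF y) <= L * enorm (x - y).

Lemma is_derive_line x v (t : R) :
  is_derive t 1 (fun s : R => F (x + s *: v)) (dotv (gradF (x + t *: v)) v).
Proof.
have E : (fun h : R => h^-1 *: (F (x + (h *: 1 + t) *: v) - F (x + t *: v))) =
         (fun h : R => h^-1 *: ((F \o shift (x + t *: v)) (h *: v) - F (x + t *: v))).
  apply: funext => h; rewrite /= /shift /=; congr (_ *: (F _ - _)).
  by rewrite -[h%:A]/(h * 1) mulr1 scalerDl addrCA.
apply: DeriveDef; rewrite /derivable /derive /= E; first exact: diff_derivable.
by rewrite -/(derive F (x + t *: v) v) deriveE.
Qed.

Lemma descent_lemma x v : F (x + v) <= F x + dotv (gradF x) v + L * sqnorm v.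
Proof.
pose phi t := F (x + t *: v).
have cont : {within `[0, 1], continuous phi}.
  apply: continuous_subspaceT => t; apply: differentiable_continuous.
  by apply/derivable1_diffP; case: (is_derive_line x v t).
have [c /[!in_itv]/= /andP[c0 c1]] := MVT ltr01 (fun t _ => is_derive_line x v t) cont.
rewrite /phi scale0r addr0 scale1r subr0 mulr1 => Fxv.
set D := gradF (x + c *: v) - gradF x.
have -> : F (x + v) = F x + dotv (gradF x) v + dotv D v by rewrite dotvBl -Fxv; ring.
have hD : sqnorm D <= L ^+ 2 * sqnorm v.
  apply: le_trans (sqnorm_le_scale (ltW L_gt0) (gradF_lip _ _)) _.
  rewrite addrC addKr sqnormZ ler_pM2l ?exprn_gt0 // ler_piMl ?sqnorm_ge0 //.
  by apply: exprn_ile1; exact: ltW.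
have Linv_gt0 : 0 < L^-1 by rewrite invr_gt0.
have := dotv_young D v Linv_gt0; rewrite invrK.
have : L^-1 * sqnorm D <= L * sqnorm v by rewrite ler_pdivrMl // mulrA -expr2.
lra.
Qed.

End DescentLemma.

Section MeasurableVectors.
Variables (R : realType) (d : nat) (dT : measure_display) (T : measurableType dT).
Implicit Types (X Y : T -> 'rV[R]_d).

Definition measurable_vec X := forall i, measurable_fun setT (fun w => X w 0 i).

Lemma measurable_vec_cst (x : 'rV[R]_d) : measurable_vec (fun=> x).
Proof. by move=> i; exact: measurable_cst. Qed.

Lemma measurable_vecD X Y :
  measurable_vec X -> measurable_vec Y -> measurable_vec (fun w => X w + Y w).
Proof. by move=> mX mY i; under eq_fun do rewrite mxE; exact: measurable_funD. Qed.

Lemma measurable_vecZ (c : T -> R) X : measurable_fun setT c ->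
  measurable_vec X -> measurable_vec (fun w => c w *: X w).
Proof. by move=> mc mX i; under eq_fun do rewrite mxE; exact: measurable_funM. Qed.

Lemma measurable_vecN X : measurable_vec X -> measurable_vec (fun w => - X w).
Proof.
move=> mX; under [fun w => - X w]eq_fun do rewrite -scaleN1r.
by apply: measurable_vecZ => //; exact: measurable_cst.
Qed.

Lemma measurable_vecB X Y :
  measurable_vec X -> measurable_vec Y -> measurable_vec (fun w => X w - Y w).
Proof. by move=> mX mY; apply: measurable_vecD => //; exact: measurable_vecN. Qed.

Lemma measurable_sqnorm X : measurable_vec X -> measurable_fun setT (fun w => sqnorm (X w)).
Proof.
move=> mX; apply: measurable_sum => i.
by under eq_fun do rewrite expr2; exact: measurable_funM.
Qed.

Lemma measurable_enorm X : measurable_vec X -> measurable_fun setT (fun w => enorm (X w)).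
Proof.
move=> mX; apply: measurableT_comp (measurable_sqnorm mX).
exact: continuous_measurable_fun (@sqrt_continuous R).
Qed.

End MeasurableVectors.

Section LipschitzMeasurable.
Variables (R : realType) (d : nat).

(* n : 'I_(2 K^2 + 1) encodes the point (n - K^2) / K of the grid of mesh 1/K on [-K, K]. *)
Definition grid_value (K : nat) (n : 'I_(2 * K ^ 2).+1) : R :=
  (n%:R - (K ^ 2)%N%:R) / K%:R.

Definition grid_index (K : nat) (t : R) : 'I_(2 * K ^ 2).+1 :=
  @inord (2 * K ^ 2) (absz (Num.floor (K%:R * t) + (K ^ 2)%N%:Z)).

Lemma grid_index_near (K : nat) (t : R) : (0 < K)%N -> `|t| <= K%:R ->
  0 <= t - grid_value (grid_index K t) <= K%:R^-1.
Proof.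
move=> K0 tK; have K0' : 0 < K%:R :> R by rewrite ltr0n.
set m := Num.floor (K%:R * t).
have Kt : `|K%:R * t| <= (K ^ 2)%N%:R.
  by rewrite normrM ger0_norm ?ler0n // natrX expr2 ler_wpM2l ?ler0n.
have [mlo mhi] : - (K ^ 2)%N%:Z <= m /\ m <= (K ^ 2)%N%:Z.
  move: Kt; rewrite ler_norml => /andP[lo hi]; split.
    by rewrite floor_ge_int rmorphN.
  by rewrite -(ler_int R); apply: le_trans (floor_le _) hi.
have -> : grid_value (grid_index K t) = m%:~R / K%:R.
  rewrite /grid_value /grid_index inordK; last by lia.
  by rewrite natr_absz ger0_norm ?intrD ?addrK //; lia.
have /andP[fl fu] := floor_itv (K%:R * t); rewrite -/m intrD in fu.
have -> : t - m%:~R / K%:R = (K%:R * t - m%:~R) / K%:R by field; rewrite gt_eqF.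
rewrite divr_ge0 ?subr_ge0 ?(ltW K0') //= -[leRHS]mul1r ler_pM2r ?invr_gt0 //.
lra.
Qed.

Local Notation grid K := {ffun 'I_d -> 'I_(2 * K ^ 2).+1}.

Definition grid_point (K : nat) (z : grid K) : 'rV[R]_d :=
  \row_i grid_value (z i).

Lemma grid_point_near (K : nat) (x : 'rV[R]_d) : (0 < K)%N ->
  (forall i, `|x 0 i| <= K%:R) ->
  exists z : grid K, enorm (x - grid_point z) <= Num.sqrt d%:R / K%:R.
Proof.
move=> K0 xK; exists [ffun i => grid_index K (x 0 i)].
have coord i : (x - grid_point [ffun i => grid_index K (x 0 i)]) 0 i ^+ 2
    <= K%:R^-1 ^+ 2.
  rewrite !mxE ffunE; have /andP[lo hi] := grid_index_near K0 (xK i).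
  by rewrite lerXn2r ?nnegrE ?invr_ge0 ?ler0n.
have : sqnorm (x - grid_point [ffun i => grid_index K (x 0 i)]) <= d%:R * K%:R^-1 ^+ 2.
  apply: le_trans (ler_sum _ (fun i _ => coord i)) _.
  by rewrite sumr_const card_ord mulr_natl.
by move=> /ler_wsqrtr; rewrite sqrtrM ?ler0n // sqrtr_sqr ger0_norm ?invr_ge0 ?ler0n.
Qed.

Lemma coord_bounded (x : 'rV[R]_d) : exists K : nat, forall i, `|x 0 i| <= K%:R.
Proof.
have B0 : 0 <= \sum_i `|x 0 i| by exact: sumr_ge0.
exists (Num.Def.archi_bound (\sum_i `|x 0 i|)) => i.
apply/ltW/(le_lt_trans _ (archi_boundP B0)).
by rewrite (bigD1 i) //= lerDl sumr_ge0.
Qed.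

Variables (h : 'rV[R]_d -> R) (L : R).
Hypotheses (L_ge0 : 0 <= L) (h_lip : forall x y, `|h x - h y| <= L * enorm (x - y)).

(* A Lipschitz h is the infimum of the cones q |-> h q + L |x - q|; restricting q
   to the finite grid of mesh 1/K gives measurable upper approximations of h. *)
Definition cone_envelope (K : nat) (x : 'rV[R]_d) : R :=
  let q0 := grid_point (K := K) [ffun=> ord0] in
  \big[Num.min/h q0 + L * enorm (x - q0)]_(z : grid K)
    (h (grid_point z) + L * enorm (x - grid_point z)).

Lemma cone_envelope_ge (K : nat) (x : 'rV[R]_d) : h x <= cone_envelope K x.
Proof.
have cone_ge (q : 'rV[R]_d) : h x <= h q + L * enorm (x - q).
  by have := h_lip x q; rewrite ler_norml => /andP[_]; lra.
by rewrite le_bigmin.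
Qed.

Lemma cone_envelope_le (K : nat) (x : 'rV[R]_d) : (0 < K)%N -> (forall i, `|x 0 i| <= K%:R) ->
  cone_envelope K x <= h x + 2 * L * (Num.sqrt d%:R / K%:R).
Proof.
move=> K0 xK; have [z xz] := grid_point_near K0 xK.
have env_le : cone_envelope K x <= h (grid_point z) + L * enorm (x - grid_point z) :=
  bigmin_le _ z (fun z => h (grid_point z) + L * enorm (x - grid_point z)).
apply: le_trans env_le _.
have := h_lip x (grid_point z); rewrite ler_norml => /andP[hz _].
have := ler_wpM2l L_ge0 xz; lra.
Qed.

Variables (dT : measure_display) (T : measurableType dT).

Lemma measurable_cone_envelope K (X : T -> 'rV[R]_d) : measurable_vec X ->
  measurable_fun setT (fun w => cone_envelope K (X w)).
Proof.
move=> mX; have mcone (q : 'rV[R]_d) : measurable_fun setT (fun w => h q + L * enorm (X w - q)).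
  apply: measurable_funD; first exact: measurable_cst.
  apply: measurable_funM; first exact: measurable_cst.
  by apply: measurable_enorm; apply: measurable_vecB => //; exact: measurable_vec_cst.
rewrite /cone_envelope; elim: (index_enum _) => [|z s IH].
  by under eq_fun do rewrite big_nil; exact: mcone.
by under eq_fun do rewrite big_cons /=; exact: measurable_minr.
Qed.

Lemma measurable_lipschitz_comp (X : T -> 'rV[R]_d) :
  measurable_vec X -> measurable_fun setT (fun w => h (X w)).
Proof.
move=> mX; apply: (@measurable_fun_cvg _ _ _ _ (fun N w => cone_envelope N.+1 (X w))).
  by move=> N; exact: measurable_cone_envelope.
move=> w _; have [K XK] := coord_bounded (X w).
pose c := 2 * L * Num.sqrt d%:R.
apply: (squeeze_cvgr (f := fun=> h (X w)) (h := fun N => h (X w) + c * harmonic N)).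
- exists K => // N /= KN; rewrite cone_envelope_ge /=.
  have -> : c / N.+1%:R = 2 * L * (Num.sqrt d%:R / N.+1%:R) by rewrite /c mulrA.
  by apply: cone_envelope_le => // i; apply: le_trans (XK i) _; rewrite ler_nat; lia.
- exact: cvg_cst.
- rewrite -[X in _ --> X]addr0; apply: cvgD; first exact: cvg_cst.
  by rewrite -(mulr0 c); apply: cvgM; [exact: cvg_cst | exact: cvg_harmonic].
Qed.

End LipschitzMeasurable.

Lemma measurable_vec_lipschitz (R : realType) (d : nat) (dT : measure_display)
    (T : measurableType dT) (f : 'rV[R]_d -> 'rV[R]_d) (L : R) (X : T -> 'rV[R]_d) :
  0 <= L -> (forall x y, enorm (f x - f y) <= L * enorm (x - y)) ->
  measurable_vec X -> measurable_vec (fun w => f (X w)).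
Proof.
move=> L0 f_lip mX i; apply: (measurable_lipschitz_comp (h := fun x => f x 0 i) L0) mX.
move=> x y; apply: le_trans (f_lip x y).
by have := norm_coord_le_enorm (f x - f y) i; rewrite !mxE.
Qed.

Section AdamStep.
Variables (R : realType) (d : nat) (beta1 beta2 delta eta : R).
Implicit Types (s : 'rV[R]_d * 'rV[R]_d * 'rV[R]_d) (gt : 'rV[R]_d).

Lemma adam_step_m s gt :
  (adam_step beta1 beta2 delta eta s gt).1.2 = beta1 *: s.1.2 + (1 - beta1) *: gt.
Proof. by case: s => [[]]. Qed.

Lemma adam_step_v s gt : (adam_step beta1 beta2 delta eta s gt).2 =
  beta2 *: s.2 + (1 - beta2) *: map_mx (fun z => z ^+ 2) gt.
Proof. by case: s => [[]]. Qed.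

Lemma adam_step_theta s gt : let s' := adam_step beta1 beta2 delta eta s gt in
  s'.1.1 = s.1.1 - eta *: \row_j (s'.1.2 0 j / (Num.sqrt (s'.2 0 j) + delta)).
Proof. by case: s => [[]]. Qed.

End AdamStep.

Section MeasurableAdam.
Variables (R : realType) (d : nat) (dT : measure_display) (T : measurableType dT).
Variables (beta1 beta2 delta eta : R) (th0 : 'rV[R]_d).
Variables (g : nat -> T -> 'rV[R]_d) (alpha : nat -> T -> R).
Hypotheses (delta_gt0 : 0 < delta) (mg : forall k, measurable_vec (g k)).
Hypothesis malpha : forall k, measurable_fun setT (alpha k).

Let state k w := adam_state beta1 beta2 delta eta th0 (g^~ w) (alpha^~ w) k.
Let gt k w := gtilde (g^~ w) (alpha^~ w) k.

Lemma measurable_gtilde k : measurable_vec (gt k).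
Proof.
apply: measurable_vecD => //; apply: measurable_vecZ => //.
exact: measurable_vecB.
Qed.

Lemma continuous_inv_sqrtD : continuous (fun t : R => (Num.sqrt t + delta)^-1).
Proof.
move=> t; apply: (@continuousV R R (fun t => Num.sqrt t + delta)).
  by rewrite gt_eqF // ltr_wpDl // sqrtr_ge0.
by apply: (@continuousD _ _ _ Num.sqrt (fun=> delta));
  [exact: sqrt_continuous | exact: cst_continuous].
Qed.

Lemma measurable_adam_state k :
  [/\ measurable_vec (fun w => (state k w).1.1), measurable_vec (fun w => (state k w).1.2)
    & measurable_vec (fun w => (state k w).2)].
Proof.
elim: k => [|k [mth mm mv]]; first by split; exact: measurable_vec_cst.
have mm' : measurable_vec (fun w => (state k.+1 w).1.2).
  under [fun w => _]eq_fun do rewrite /state /= adam_step_m.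
  by apply: measurable_vecD; apply: measurable_vecZ;
    (exact: measurable_cst || exact: measurable_gtilde || done).
have mv' : measurable_vec (fun w => (state k.+1 w).2).
  under [fun w => _]eq_fun do rewrite /state /= adam_step_v.
  apply: measurable_vecD; apply: measurable_vecZ; try exact: measurable_cst; first done.
  move=> i; under eq_fun do rewrite mxE expr2.
  by apply: measurable_funM; exact: measurable_gtilde.
split=> //; under [fun w => _]eq_fun do rewrite /state /= adam_step_theta.
apply: measurable_vecB => //; apply: measurable_vecZ; first exact: measurable_cst.
move=> i; under eq_fun do rewrite mxE; apply: measurable_funM; first exact: mm'.
exact: measurableT_comp (continuous_measurable_fun continuous_inv_sqrtD) (mv' i).
Qed.

End MeasurableAdam.

Section RealSequences.
Variable R : realFieldType.
Implicit Types (f a A E H : nat -> R) (b c eta beta : R).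

Lemma sum_descent f a eta b T : (forall k, f k.+1 <= f k - eta * a k + b) ->
  eta * \sum_(k < T) a k <= f 0%N - f T + T%:R * b.
Proof.
move=> step; elim: T => [|T IH]; first by rewrite big_ord0 mulr0 subrr mul0r addr0.
by rewrite big_ord_recr mulrDr -natr1 /=; have := step T; lra.
Qed.

Lemma sum_pred_le f T : (forall k, 0 <= f k) ->
  \sum_(k < T) f k.-1 <= 2 * \sum_(k < T) f k.
Proof.
move=> f0; case: T => [|T]; first by rewrite !big_ord0 mulr0.
have S1 : f 0%N <= \sum_(k < T.+1) f k by rewrite big_ord_recl lerDl sumr_ge0.
have S2 : \sum_(k < T) f k <= \sum_(k < T.+1) f k by rewrite big_ord_recr lerDl.
rewrite big_ord_recl /=; under eq_bigr do rewrite add0n.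
lra.
Qed.

Lemma momentum_error_sum beta c A E H T :
  0 <= beta < 1 -> 0 <= c ->
  (forall k, 0 <= A k) -> (forall k, 0 <= E k) -> (forall k, 0 <= H k) ->
  (forall k, E k <= beta * A k + (1 - beta) * H k) ->
  (forall k, A k.+1 <= (1 + (1 - beta) / 2) * E k + c) ->
  (1 - beta) / 2 * \sum_(k < T) E k <= A 0%N + T%:R * c + \sum_(k < T) H k.
Proof.
move=> /andP[b0 b1] c0 A0 E0 H0 EA AE.
have SA_le : \sum_(k < T) A k <= A 0%N + (1 + (1 - beta) / 2) * \sum_(k < T) E k + T%:R * c.
  suff : \sum_(k < T.+1) A k <= A 0%N + (1 + (1 - beta) / 2) * \sum_(k < T) E k + T%:R * c.
    by rewrite big_ord_recr /=; have := A0 T; lra.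
  elim: T => [|T IH]; first by rewrite big_ord_recr !big_ord0 /=; lra.
  rewrite big_ord_recr [\sum_(k < T.+1) E k]big_ord_recr /= [T.+1%:R]mulrSr.
  by have := AE T; lra.
set SA := \sum_(k < T) A k in SA_le *; set SE := \sum_(k < T) E k in SA_le *.
set SH := \sum_(k < T) H k.
have SE_le : SE <= beta * SA + (1 - beta) * SH.
  by rewrite !mulr_sumr -big_split; apply: ler_sum => k _.
have SE0 : 0 <= SE by exact: sumr_ge0.
have SH0 : 0 <= SH by exact: sumr_ge0.
have := A0 0%N; have : 0 <= (1 - beta) ^+ 2 * SE by rewrite mulr_ge0 ?sqr_ge0.
have : beta * SA <= beta * (A 0%N + (1 + (1 - beta) / 2) * SE + T%:R * c).
  exact: ler_wpM2l.
have : 0 <= beta * SH by exact: mulr_ge0.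
have : 0 <= T%:R * c by exact: mulr_ge0.
rewrite expr2; nra.
Qed.

End RealSequences.

Section AdamConstants.
Variables (R : realType) (L delta beta1 G a : R).

Definition gtilde_bound := 3 * (1 + 8 * a ^+ 2) * G ^+ 2.
Definition step_bound := gtilde_bound / delta ^+ 2.
Definition precond_lb := (1 + gtilde_bound + delta)^-1.
Definition noise_coef := 2 + 24 * a ^+ 2.
Definition drift_coef := 1 + 2 / (1 - beta1) + 24 * a ^+ 2.
Definition momentum_coef := (precond_lb * delta * ((1 - beta1) / 2))^-1.

Definition adam_C1 := 2 / precond_lb + 2 * momentum_coef.
Definition adam_C2 :=
  2 / precond_lb * (L * step_bound) + momentum_coef * drift_coef * (L ^+ 2 * step_bound).
Definition adam_C3 := momentum_coef * (2 + 3 * noise_coef).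

Lemma gtilde_bound_ge0 : 0 <= gtilde_bound.
Proof. by apply: mulr_ge0; [have := sqr_ge0 a; lra | exact: sqr_ge0]. Qed.

Lemma step_bound_ge0 : 0 <= step_bound.
Proof. by rewrite /step_bound divr_ge0 ?sqr_ge0 ?gtilde_bound_ge0. Qed.

Hypotheses (L_gt0 : 0 < L) (delta_gt0 : 0 < delta) (beta1_lt1 : beta1 < 1).

Lemma precond_lb_gt0 : 0 < precond_lb.
Proof.
rewrite /precond_lb invr_gt0 addr_gt0 // (lt_le_trans ltr01) //.
by rewrite lerDl gtilde_bound_ge0.
Qed.

Hypothesis G_gt0 : 0 < G.

Lemma gtilde_bound_gt0 : 0 < gtilde_bound.
Proof. by apply: mulr_gt0; [have := sqr_ge0 a; lra | exact: exprn_gt0]. Qed.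

Lemma step_bound_gt0 : 0 < step_bound.
Proof. by rewrite /step_bound divr_gt0 ?exprn_gt0 ?gtilde_bound_gt0. Qed.

Lemma momentum_coef_gt0 : 0 < momentum_coef.
Proof.
by rewrite /momentum_coef invr_gt0 !mulr_gt0 ?precond_lb_gt0 ?subr_gt0 ?invr_gt0.
Qed.

Lemma adam_constants_gt0 : [/\ 0 < adam_C1, 0 < adam_C2 & 0 < adam_C3].
Proof.
have w0 := precond_lb_gt0; have k0 := momentum_coef_gt0; have U0 := step_bound_gt0.
have drift0 : 0 < drift_coef.
  have : 0 < 2 / (1 - beta1) by rewrite divr_gt0 // subr_gt0.
  by rewrite /drift_coef; have := sqr_ge0 a; lra.
have two0 : 0 < 2 :> R by [].
split.
- by apply: addr_gt0; [exact: divr_gt0 | exact: mulr_gt0].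
- apply: addr_gt0; first by apply: mulr_gt0; [exact: divr_gt0 | exact: mulr_gt0].
  by apply: mulr_gt0; [exact: mulr_gt0 | apply: mulr_gt0 => //; exact: exprn_gt0].
- by apply: mulr_gt0 => //; rewrite /noise_coef; have := sqr_ge0 a; lra.
Qed.

End AdamConstants.

Lemma weighted_product_ge (R : realFieldType) (w w0 delta x y : R) :
  0 < w0 -> w0 <= w -> 0 < delta -> w <= delta^-1 ->
  w0 / 2 * x ^+ 2 - (y - x) ^+ 2 / (2 * delta) <= x * (y * w).
Proof.
move=> w00 w0w delta0 wdelta.
have xy : x ^+ 2 / 2 - (y - x) ^+ 2 / 2 <= x * y by have := sqr_ge0 y; rewrite !expr2; lra.
have w0' : 0 <= w by exact: le_trans (ltW w00) w0w.
have := ler_wpM2l w0' xy.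
have : w0 * (x ^+ 2 / 2) <= w * (x ^+ 2 / 2) by rewrite ler_wpM2r ?divr_ge0 ?sqr_ge0.
have : w * ((y - x) ^+ 2 / 2) <= delta^-1 * ((y - x) ^+ 2 / 2).
  by rewrite ler_wpM2r ?divr_ge0 ?sqr_ge0.
have -> : (y - x) ^+ 2 / (2 * delta) = delta^-1 * ((y - x) ^+ 2 / 2).
  by field; rewrite gt_eqF.
rewrite [y * w]mulrC mulrCA; lra.
Qed.

Section AdamRun.
Variables (R : realType) (d : nat) (L delta beta1 beta2 eta G a Fs : R).
Variables (F : 'rV[R]_d -> R) (gradF : 'rV[R]_d -> 'rV[R]_d).
Variables (th0 : 'rV[R]_d) (g : nat -> 'rV[R]_d) (alpha : nat -> R).
Hypotheses (L_gt0 : 0 < L) (delta_gt0 : 0 < delta).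
Hypotheses (beta1_ge0 : 0 <= beta1) (beta1_lt1 : beta1 < 1).
Hypotheses (beta2_ge0 : 0 <= beta2) (beta2_lt1 : beta2 < 1).
Hypotheses (eta_gt0 : 0 < eta) (eta_le1 : eta <= 1).
Hypothesis gradF_lip : forall x y, enorm (gradF x - gradF y) <= L * enorm (x - y).
Hypothesis F_descent : forall x v, F (x + v) <= F x + dotv (gradF x) v + L * sqnorm v.
Hypothesis F_ge : forall x, Fs <= F x.
Hypothesis alpha_le : forall k, `|alpha k| <= 2 * a.
Hypothesis g_le : forall k, enorm (g k) <= G.

(* [state k] is (theta_k, m_(k-1), v_(k-1)): [mom k.+1] and [var k.+1] are the
   m_k and v_k of the update theta_(k+1) = theta_k - eta u_k. *)
Let state k := adam_state beta1 beta2 delta eta th0 g alpha k.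
Let th k := (state k).1.1.
Let mom k := (state k).1.2.
Let var k := (state k).2.
Let gt := gtilde g alpha.
Let u k := \row_j (mom k.+1 0 j / (Num.sqrt (var k.+1 0 j) + delta)).
Let grad k := gradF (th k).
Let noise k := sqnorm (g k - grad k).
Let Gam := gtilde_bound G a.
Let drift := L ^+ 2 * eta ^+ 2 * step_bound delta G a.

Lemma mom_next k : mom k.+1 = beta1 *: mom k + (1 - beta1) *: gt k.
Proof. exact: adam_step_m. Qed.

Lemma var_next k j : var k.+1 0 j = beta2 * var k 0 j + (1 - beta2) * gt k 0 j ^+ 2.
Proof. by rewrite /var /state /= adam_step_v !mxE. Qed.

Lemma th_next k : th k.+1 = th k - eta *: u k.
Proof. exact: adam_step_theta. Qed.

Lemma sqr_alpha_le k : alpha k ^+ 2 <= 4 * a ^+ 2.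
Proof. by have := alpha_le k; rewrite ler_norml => /andP[lo hi]; rewrite !expr2; nra. Qed.

Lemma sqnorm_gtilde_le k : sqnorm (gt k) <= Gam.
Proof.
have alpha2 := sqr_alpha_le k.
have gG j : sqnorm (g j) <= G ^+ 2 by exact: sqnorm_le_sqr.
have agG j : alpha k ^+ 2 * sqnorm (g j) <= 4 * a ^+ 2 * G ^+ 2.
  by apply: ler_pM; rewrite ?sqr_ge0 ?sqnorm_ge0.
have -> : gt k = g k + alpha k *: g k + (- alpha k) *: g k.-1.
  by rewrite /gt /gtilde scalerBr addrA scaleNr.
apply: le_trans (sqnormD3_le _ _ _) _.
rewrite !sqnormZ sqrrN /Gam /gtilde_bound.
by have := gG k; have := agG k; have := agG k.-1; lra.
Qed.

Lemma sqnorm_mom_le k : sqnorm (mom k) <= Gam.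
Proof.
have Gam0 : 0 <= Gam by exact: gtilde_bound_ge0.
elim: k => [|k IH]; first by rewrite /mom /= sqnorm0.
rewrite mom_next; apply: le_trans (sqnorm_convex _ _ _) _; first by rewrite beta1_ge0 ltW.
have h1 : beta1 * sqnorm (mom k) <= beta1 * Gam by exact: ler_wpM2l.
have h2 : (1 - beta1) * sqnorm (gt k) <= (1 - beta1) * Gam.
  by apply: ler_wpM2l; [rewrite subr_ge0 ltW | exact: sqnorm_gtilde_le].
lra.
Qed.

Lemma var_bounds k j : 0 <= var k 0 j <= Gam.
Proof.
have Gam0 : 0 <= Gam by exact: gtilde_bound_ge0.
elim: k => [|k /andP[lo hi]]; first by rewrite /var /state /= mxE lexx.
have gt_j := le_trans (sqr_coord_le_sqnorm (gt k) j) (sqnorm_gtilde_le k).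
have b2 : 0 <= 1 - beta2 by rewrite subr_ge0 ltW.
rewrite var_next; apply/andP; split.
  by rewrite addr_ge0 // mulr_ge0 // sqr_ge0.
have h1 : beta2 * var k 0 j <= beta2 * Gam by exact: ler_wpM2l.
have h2 : (1 - beta2) * gt k 0 j ^+ 2 <= (1 - beta2) * Gam by exact: ler_wpM2l.
lra.
Qed.

Lemma sqnorm_u_le k : sqnorm (u k) <= step_bound delta G a.
Proof.
apply: (@le_trans _ _ (sqnorm (mom k.+1) / delta ^+ 2)); last first.
  by rewrite ler_pM2r ?invr_gt0 ?exprn_gt0 // sqnorm_mom_le.
rewrite /sqnorm mulr_suml; apply: ler_sum => j _; rewrite mxE expr_div_n.
have s0 := sqrtr_ge0 (var k.+1 0 j).
have sd := ltr_wpDl s0 delta_gt0.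
rewrite ler_wpM2l ?sqr_ge0 // lef_pV2 ?posrE ?exprn_gt0 //.
by rewrite lerXn2r ?nnegrE ?(ltW sd) ?(ltW delta_gt0) // lerDr.
Qed.

Lemma sqnorm_grad_next_le k : sqnorm (grad k.+1 - grad k) <= drift.
Proof.
apply: le_trans (sqnorm_le_scale (ltW L_gt0) (gradF_lip _ _)) _.
rewrite th_next addrAC subrr add0r sqnormN sqnormZ /drift -mulrA.
by rewrite ler_wpM2l ?sqr_ge0 // ler_wpM2l ?sqr_ge0 // sqnorm_u_le.
Qed.

Lemma sqnorm_grad_pred_le k : sqnorm (grad k - grad k.-1) <= drift.
Proof.
case: k => [|k]; last exact: sqnorm_grad_next_le.
by rewrite subrr sqnorm0; exact: mulr_ge0 (mulr_ge0 (sqr_ge0 _) (sqr_ge0 _)) (step_bound_ge0 _ _ _).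
Qed.

Lemma dotv_grad_u_ge k : precond_lb delta G a / 2 * sqnorm (grad k)
  - sqnorm (mom k.+1 - grad k) / (2 * delta) <= dotv (grad k) (u k).
Proof.
rewrite /dotv /sqnorm mulr_sumr mulr_suml -sumrB; apply: ler_sum => j _; rewrite !mxE.
have /andP[v0 vGam] := var_bounds k.+1 j.
set s := Num.sqrt (var k.+1 0 j).
have s0 : 0 <= s := sqrtr_ge0 _.
have s_le : s <= 1 + Gam.
  have : s ^+ 2 = var k.+1 0 j by rewrite sqr_sqrtr.
  have := sqr_ge0 (s - 1); rewrite !expr2; lra.
have sd := ltr_wpDl s0 delta_gt0.
apply: weighted_product_ge => //.
- exact: precond_lb_gt0.
- rewrite lef_pV2 ?posrE // ?lerD2r //.
  by rewrite addr_gt0 // (lt_le_trans ltr01) // lerDl gtilde_bound_ge0.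
- by rewrite lef_pV2 ?posrE // lerDr.
Qed.

Lemma descent_step k : F (th k.+1) <=
  F (th k) - eta * dotv (grad k) (u k) + L * (eta ^+ 2 * step_bound delta G a).
Proof.
rewrite th_next; apply: le_trans (F_descent _ _) _.
rewrite dotvNr dotvZr sqnormN sqnormZ lerD2l.
by rewrite ler_wpM2l ?(ltW L_gt0) // ler_wpM2l ?sqr_ge0 // sqnorm_u_le.
Qed.

Let merr k := sqnorm (mom k - grad k).
Let merr_next k := sqnorm (mom k.+1 - grad k).
Let gerr k := sqnorm (gt k - grad k).

Lemma merr_next_le k : merr_next k <= beta1 * merr k + (1 - beta1) * gerr k.
Proof.
rewrite /merr_next /merr /gerr.
have -> : mom k.+1 - grad k = beta1 *: (mom k - grad k) + (1 - beta1) *: (gt k - grad k).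
  by rewrite mom_next; apply/rowP => j; rewrite !mxE; ring.
by apply: sqnorm_convex; rewrite beta1_ge0 ltW.
Qed.

Lemma merr_succ_le k : merr k.+1 <=
  (1 + (1 - beta1) / 2) * merr_next k + (1 + ((1 - beta1) / 2)^-1) * drift.
Proof.
have eps0 : 0 < (1 - beta1) / 2 by rewrite divr_gt0 // subr_gt0.
rewrite /merr /merr_next.
have -> : mom k.+1 - grad k.+1 = (mom k.+1 - grad k) + (grad k - grad k.+1).
  by rewrite addrA subrK.
apply: le_trans (sqnormD_young _ _ eps0) _; rewrite lerD2l sqnormBC.
by rewrite ler_wpM2l ?sqnorm_grad_next_le // addr_ge0 // ltW // invr_gt0.
Qed.

Lemma gerr_le k : gerr k <= noise_coef a * (noise k + noise k.-1) + 24 * a ^+ 2 * drift.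
Proof.
have alpha2 := sqr_alpha_le k.
have gg : sqnorm (g k - g k.-1) <= 3 * noise k + 3 * drift + 3 * noise k.-1.
  have -> : g k - g k.-1 = (g k - grad k) + (grad k - grad k.-1) - (g k.-1 - grad k.-1).
    by apply/rowP => j; rewrite !mxE; ring.
  apply: le_trans (sqnormD3_le _ _ _) _; rewrite sqnormN /noise.
  by have := sqnorm_grad_pred_le k; lra.
have agg : alpha k ^+ 2 * sqnorm (g k - g k.-1) <=
    4 * a ^+ 2 * (3 * noise k + 3 * drift + 3 * noise k.-1).
  by apply: ler_pM; rewrite ?sqr_ge0 ?sqnorm_ge0.
have -> : gerr k = sqnorm ((g k - grad k) + alpha k *: (g k - g k.-1)).
  by rewrite /gerr /gt /gtilde addrAC.
apply: le_trans (sqnormD_le _ _) _; rewrite sqnormZ -/(noise k) /noise_coef.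
have := sqnorm_ge0 (g k.-1 - grad k.-1); have := sqr_ge0 a.
rewrite /noise in agg *; nra.
Qed.

Lemma merr0_le : merr 0 <= 2 * G ^+ 2 + 2 * noise 0.
Proof.
have -> : merr 0 = sqnorm ((g 0 - grad 0) - g 0).
  by rewrite /merr /mom /= add0r addrC addKr.
apply: le_trans (sqnormD_le _ _) _; rewrite sqnormN.
by have := sqnorm_le_sqr (g_le 0); rewrite /noise; lra.
Qed.

Let U := step_bound delta G a.
Let eps := (1 - beta1) / 2.
Let N T := \sum_(k < T) noise k.

Lemma sum_descent_ge T : precond_lb delta G a / 2 * (\sum_(k < T) sqnorm (grad k))
  - (\sum_(k < T) merr_next k) / (2 * delta) <= (F th0 - Fs) / eta + L * U * (T%:R * eta).
Proof.
have telescoped := sum_descent (f := fun k => F (th k))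
  (a := fun k => dotv (grad k) (u k)) T descent_step.
rewrite -/U [th 0]/= in telescoped.
have inner : precond_lb delta G a / 2 * (\sum_(k < T) sqnorm (grad k))
    - (\sum_(k < T) merr_next k) / (2 * delta) <= \sum_(k < T) dotv (grad k) (u k).
  rewrite mulr_sumr mulr_suml -sumrB.
  by apply: ler_sum => k _; exact: dotv_grad_u_ge.
rewrite -(ler_pM2l eta_gt0).
have -> : eta * ((F th0 - Fs) / eta + L * U * (T%:R * eta)) =
    F th0 - Fs + T%:R * (L * (eta ^+ 2 * U)) by field; rewrite gt_eqF.
have := ler_wpM2l (ltW eta_gt0) inner; have := F_ge (th T).
lra.
Qed.

Lemma sum_drift_le T : T%:R * drift <= L ^+ 2 * U * (T%:R * eta).
Proof.
have eta2 : eta ^+ 2 <= eta by rewrite expr2 ler_piMl ?(ltW eta_gt0).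
have -> : T%:R * drift = L ^+ 2 * U * T%:R * eta ^+ 2 by rewrite /drift -/U; ring.
rewrite mulrA ler_wpM2l // mulr_ge0 ?ler0n // mulr_ge0 ?sqr_ge0 //.
exact: step_bound_ge0.
Qed.

Lemma sum_gerr_le T :
  \sum_(k < T) gerr k <= noise_coef a * (3 * N T) + 24 * a ^+ 2 * (T%:R * drift).
Proof.
apply: (@le_trans _ _ (\sum_(k < T)
  (noise_coef a * (noise k + noise k.-1) + 24 * a ^+ 2 * drift))).
  by apply: ler_sum => k _; exact: gerr_le.
rewrite big_split /= -mulr_sumr big_split /= sumr_const card_ord -/(N T).
have -> : (24 * a ^+ 2 * drift) *+ T = 24 * a ^+ 2 * (T%:R * drift).
  by rewrite -mulr_natl; ring.
have pred_le : \sum_(k < T) noise k.-1 <= 2 * N T.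
  exact: sum_pred_le (fun k => sqnorm_ge0 (g k - grad k)).
rewrite lerD2r ler_wpM2l //; first by rewrite /noise_coef; have := sqr_ge0 a; lra.
lra.
Qed.

Lemma sum_merr_next_le T : (0 < T)%N -> eps * \sum_(k < T) merr_next k <=
  2 * G ^+ 2 + (2 + 3 * noise_coef a) * N T + drift_coef beta1 a * (L ^+ 2 * U * (T%:R * eta)).
Proof.
move=> T0; have eps0 : 0 < eps by rewrite divr_gt0 // subr_gt0.
have drift0 : 0 <= drift := mulr_ge0 (mulr_ge0 (sqr_ge0 L) (sqr_ge0 eta)) (step_bound_ge0 _ _ _).
have c0 : 0 <= (1 + eps^-1) * drift.
  by apply: mulr_ge0 drift0; apply: addr_ge0 => //; rewrite invr_ge0 ltW.
have := momentum_error_sum (A := merr) (E := merr_next) (H := gerr) T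
  (_ : 0 <= beta1 < 1) c0 (fun k => sqnorm_ge0 _) (fun k => sqnorm_ge0 _)
  (fun k => sqnorm_ge0 _) merr_next_le merr_succ_le.
rewrite beta1_ge0 beta1_lt1 -/eps => /(_ isT) momentum.
have noise0 : noise 0 <= N T.
  by rewrite /N -(prednK T0) big_ord_recl lerDl sumr_ge0 // => k _; exact: sqnorm_ge0.
have dc0 : 0 <= drift_coef beta1 a.
  have : 0 < 2 / (1 - beta1) by rewrite divr_gt0 // subr_gt0.
  by rewrite /drift_coef; have := sqr_ge0 a; lra.
have drift_sum : T%:R * ((1 + eps^-1) * drift) + 24 * a ^+ 2 * (T%:R * drift) <=
    drift_coef beta1 a * (L ^+ 2 * U * (T%:R * eta)).
  have -> : T%:R * ((1 + eps^-1) * drift) + 24 * a ^+ 2 * (T%:R * drift) =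
      drift_coef beta1 a * (T%:R * drift) by rewrite /drift_coef /eps invf_div; ring.
  exact/ler_wpM2l/sum_drift_le.
have := sum_gerr_le T; have := merr0_le; lra.
Qed.

Lemma adam_pathwise_bound T : (0 < T)%N ->
  \sum_(k < T) sqnorm (grad k) <=
    adam_C1 delta beta1 G a * (F th0 - Fs + G ^+ 2) / eta
    + adam_C2 L delta beta1 G a * (T%:R * eta) + adam_C3 delta beta1 G a * N T.
Proof.
move=> T0.
set w := precond_lb delta G a; set kappa := momentum_coef delta beta1 G a.
set SG := \sum_(k < T) sqnorm (grad k); set SE := \sum_(k < T) merr_next k.
set X := F th0 - Fs; set Y := T%:R * eta.
have w0 : 0 < w by exact: precond_lb_gt0.
have kappa0 : 0 < kappa by exact: momentum_coef_gt0.
have SG_le : SG <= 2 / w * (X / eta + L * U * Y) + kappa * (eps * SE).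
  have -> : kappa * (eps * SE) = SE / (w * delta).
    by rewrite /kappa /momentum_coef -/w /eps; field; rewrite !gt_eqF ?subr_gt0.
  have two_w : 0 <= 2 / w by rewrite divr_ge0 // ltW.
  have := ler_wpM2l two_w (sum_descent_ge T); rewrite -/X -/Y.
  have -> : 2 / w * (w / 2 * SG - SE / (2 * delta)) = SG - SE / (w * delta).
    by field; rewrite !gt_eqF.
  lra.
have := ler_wpM2l (ltW kappa0) (sum_merr_next_le T0); rewrite -/SE -/Y.
have X0 : 0 <= X by rewrite subr_ge0.
have G2 : G ^+ 2 <= G ^+ 2 / eta by rewrite ler_pdivlMr // ler_piMr ?sqr_ge0.
have slack0 : 0 <= 2 / w * (G ^+ 2 / eta) + 2 * kappa * (X / eta).
  have eta0 := ltW eta_gt0.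
  apply: addr_ge0; apply: mulr_ge0.
  - exact: divr_ge0 _ (ltW w0).
  - exact: divr_ge0 (sqr_ge0 G) eta0.
  - exact: mulr_ge0 _ (ltW kappa0).
  - exact: divr_ge0 X0 eta0.
have : 0 <= 2 * kappa * (G ^+ 2 / eta - G ^+ 2).
  by apply: mulr_ge0; rewrite ?subr_ge0 // mulr_ge0 // ltW.
have -> : adam_C1 delta beta1 G a * (X + G ^+ 2) / eta + adam_C2 L delta beta1 G a * Y
    + adam_C3 delta beta1 G a * N T
  = 2 / w * (X / eta + L * U * Y)
    + kappa * (2 * G ^+ 2 + (2 + 3 * noise_coef a) * N T + drift_coef beta1 a * (L ^+ 2 * U * Y))
    + (2 / w * (G ^+ 2 / eta) + 2 * kappa * (X / eta)) + 2 * kappa * (G ^+ 2 / eta - G ^+ 2).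
  by rewrite /adam_C1 /adam_C2 /adam_C3 -/w -/kappa -/U; field; rewrite !gt_eqF.
lra.
Qed.

End AdamRun.

Section Expectation.
Variables (R : realType) (dT : measure_display) (Omega : measurableType dT).
Variable P : probability Omega R.

Lemma integral_sum_EFin (f : nat -> Omega -> R) (T : nat) :
  (forall k, measurable_fun setT (f k)) -> (forall k w, 0 <= f k w) ->
  (\int[P]_w (\sum_(k < T) f k w)%:E = \sum_(k < T) \int[P]_w (f k w)%:E)%E.
Proof.
move=> mf f0; under eq_integral do rewrite -sumEFin.
apply: ge0_integral_sum => // [k|k w _]; last by rewrite lee_fin.
exact/measurable_EFinP.
Qed.

Lemma sum_expectation_le (X Y : nat -> Omega -> R) (c K s : R) (T : nat) :
  0 <= c -> 0 <= K ->
  (forall k, measurable_fun setT (X k)) -> (forall k, measurable_fun setT (Y k)) ->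
  (forall k w, 0 <= X k w) -> (forall k w, 0 <= Y k w) ->
  (forall k, \int[P]_w (Y k w)%:E <= s%:E)%E ->
  (forall w, \sum_(k < T) X k w <= c + K * \sum_(k < T) Y k w) ->
  (\sum_(k < T) \int[P]_w (X k w)%:E <= (c + K * (T%:R * s))%:E)%E.
Proof.
move=> c0 K0 mX mY X0 Y0 EY XY.
have mSY : measurable_fun setT (fun w => \sum_(k < T) Y k w) by exact: measurable_sum.
have SY0 w : 0 <= \sum_(k < T) Y k w by exact: sumr_ge0.
rewrite -integral_sum_EFin //.
have pathwise : (\int[P]_w (\sum_(k < T) X k w)%:E
    <= \int[P]_w (c + K * \sum_(k < T) Y k w)%:E)%E.
  apply: ge0_le_integral => //.
  - by move=> w _; rewrite lee_fin sumr_ge0.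
  - by apply/measurable_EFinP; exact: measurable_sum.
  - apply/measurable_EFinP; apply: measurable_funD; first exact: measurable_cst.
    by apply: measurable_funM => //; exact: measurable_cst.
  - by move=> w _; rewrite lee_fin.
apply: le_trans pathwise _.
under eq_integral do rewrite EFinD EFinM.
rewrite ge0_integralD //; last 2 first.
- by move=> w _; rewrite lee_fin mulr_ge0.
- by apply/measurable_EFinP; apply: measurable_funM => //; exact: measurable_cst.
rewrite integral_cst //; set m := (X in (c%:E * X + _)%E).
have -> : m = 1%E by exact: probability_setT.
rewrite mule1 EFinD; apply: leeD2l.
rewrite ge0_integralZl_EFin //; last exact/measurable_EFinP.
rewrite EFinM lee_wpmul2l ?lee_fin // integral_sum_EFin //.
have : (\sum_(k < T) \int[P]_w (Y k w)%:E <= \sum_(k < T) s%:E)%E.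
  by apply: lee_sum => k _; exact: EY.
move=> /le_trans; apply; first by rewrite sumEFin sumr_const card_ord mulr_natl.
by move=> w _; rewrite lee_fin.
Qed.

End Expectation.

Lemma sigma_of_setT (R : realType) (T : Type) (d : nat) (X : T -> 'rV[R]_d) :
  sigma_of X setT.
Proof. by move=> G [[G0 GC _] _]; have := GC set0 G0; rewrite setD0. Qed.

Theorem theorem1 (R : realType) (d : nat) (L delta beta1 G alpha_base : R) :
  0 < L -> 0 < delta -> 0 <= beta1 < 1 -> 0 < G -> 0 < alpha_base ->
  exists C1 C2 C3 : R, 0 < C1 /\ 0 < C2 /\ 0 < C3 /\
  forall (dO : measure_display) (Omega : measurableType dO)
         (P : probability Omega R)
         (F : 'rV[R]_d -> R) (gradF : 'rV[R]_d -> 'rV[R]_d)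
         (beta2 eta sigma : R) (th0 : 'rV[R]_d)
         (g : nat -> Omega -> 'rV[R]_d) (alpha : nat -> Omega -> R),
    (* F is differentiable with gradient gradF, which is L-Lipschitz *)
    (forall x, differentiable F x) ->
    (forall x v, 'd F x v = dotv (gradF x) v) ->
    (forall x y, enorm (gradF x - gradF y) <= L * enorm (x - y)) ->
    (* F is bounded below *)
    has_lbound (range F) ->
    (* parameters *)
    0 <= beta2 < 1 -> 0 < eta -> eta <= Num.min 1 L^-1 -> 0 <= sigma ->
    (* curvature coefficients *)
    (forall k, measurable_fun setT (alpha k)) ->
    (forall w, alpha 0%N w = 0) ->
    (forall k w, `|alpha k w| <= 2 * alpha_base) ->
    (* stochastic gradients *)
    (forall k (i : 'I_d), measurable_fun setT (fun w => g k w 0 i)) ->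
    (forall k w, enorm (g k w) <= G) ->
    let theta k w := adam_theta beta1 beta2 delta eta th0
                       (fun j => g j w) (fun j => alpha j w) k in
    (* E[g_k | theta_k] = gradF(theta_k) *)
    (forall k (i : 'I_d) (A : set Omega), sigma_of (theta k) A ->
       (\int[P]_(w in A) (g k w 0 i - gradF (theta k w) 0 i)%:E = 0)%E) ->
    (* E[ ||g_k - gradF(theta_k)||^2 | theta_k ] <= sigma^2 *)
    (forall k (A : set Omega), sigma_of (theta k) A ->
       (\int[P]_(w in A) (sqnorm (g k w - gradF (theta k w)))%:E
          <= (sigma ^+ 2)%:E * P A)%E) ->
    forall T : nat, (1 <= T)%N ->
      ((T%:R^-1)%:E * \sum_(k < T) \int[P]_w (sqnorm (gradF (theta k w)))%:E
        <= ((C1 * (F th0 - inf (range F) + G ^+ 2)) / (eta * T%:R)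
             + C2 * eta + C3 * sigma ^+ 2)%:E)%E.
Proof.
move=> L0 delta0 /andP[beta1_ge0 beta1_lt1] G0 _.
have [C1_gt0 C2_gt0 C3_gt0] := adam_constants_gt0 alpha_base L0 delta0 beta1_lt1 G0.
exists (adam_C1 delta beta1 G alpha_base), (adam_C2 L delta beta1 G alpha_base),
  (adam_C3 delta beta1 G alpha_base).
do 3![split=> //].
move=> dO Omega P F gradF beta2 eta sigma th0 g alpha F_diff dF gradF_lip F_lb
  /andP[beta2_ge0 beta2_lt1] eta_gt0 eta_min _ malpha _ alpha_le mg g_le theta _ noise_le T T0.
have eta_le1 : eta <= 1 by move: eta_min; rewrite le_min => /andP[].
have F_ge x : inf (range F) <= F x by apply: ge_inf => //; exists x.
have mgrad k : measurable_vec (fun w => gradF (theta k w)).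
  apply: measurable_vec_lipschitz (ltW L0) gradF_lip _.
  by have [] := measurable_adam_state beta1 beta2 eta th0 delta0 mg malpha k.
have Enoise k : (\int[P]_w (sqnorm (g k w - gradF (theta k w)))%:E <= (sigma ^+ 2)%:E)%E.
  by have := noise_le k setT (sigma_of_setT (X := theta k)); rewrite probability_setT mule1.
have pathwise w := adam_pathwise_bound th0 L0 delta0 beta1_ge0 beta1_lt1 beta2_ge0
  beta2_lt1 eta_gt0 eta_le1 gradF_lip (descent_lemma L0 F_diff dF gradF_lip) F_ge
  (alpha_le^~ w) (g_le^~ w) T0.
have := sum_expectation_le (P := P) _ (ltW C3_gt0)
  (fun k => measurable_sqnorm (mgrad k))
  (fun k => measurable_sqnorm (measurable_vecB (mg k) (mgrad k)))
  (fun _ _ => sqnorm_ge0 _) (fun _ _ => sqnorm_ge0 _) Enoise pathwise.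
have X0 : 0 <= F th0 - inf (range F) + G ^+ 2 by rewrite addr_ge0 ?sqr_ge0 ?subr_ge0.
have eta0 := ltW eta_gt0.
move/(_ (addr_ge0 (divr_ge0 (mulr_ge0 (ltW C1_gt0) X0) eta0)
  (mulr_ge0 (ltW C2_gt0) (mulr_ge0 (ler0n _ _) eta0)))) => bound.
have T_gt0 : 0 < T%:R :> R by rewrite ltr0n.
apply: le_trans (lee_wpmul2l _ bound) _; first by rewrite lee_fin invr_ge0 ltW.
rewrite -EFinM lee_fin le_eqVlt; apply/orP; left; apply/eqP.
by field; rewrite !gt_eqF.
Qed.
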